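(* In the construction below, every nonempty $E^*\subseteq E$ with $|E^*| < st+2k$ satisfies $\beta(E^* ) > B$; in particular, no such $E^*$ is an admissible solution of the constructed CSCN instance.
   Context: Let $G'=(V',E')$ be a connected undirected graph, let $S=\{u_1,\dots,u_s\}\subseteq V'$ with $s=|S|$, and let $k\ge 0$ be a real number with $|E'|\ge 2k$. Let $t\ge 1$ be an integer. Let $V = V'\cup\{v_{i,j} : 1\le i\le s,\ 1\le j\le t\}$ (the $v_{i,j}$ are new vertices) and let $E$ be the set of all pairs of vertices of $V$ (edges undirected). Define $w^*:E\to\mathbb{R}$ by: $w^*(\{v_{i,j},u_i\})=1$ for all $i,j$; $w^*(\{v_{i,j},u\})=0$ for every $u\in V\setminus\{u_i\}$; $w^*(e)=\frac12$ for every $e\in E'$; $w^*(\{u,u'\})=0$ for $u,u'\in V'$ with $\{u,u'\}\notin E'$. Set $A=\frac{st+k}{st+2k}$ and $B=\frac{\frac12(|E'|-2k)}{st+2k}$. For nonempty $E^*\subseteq E$ let $\alpha(E^* )=\frac{\sum_{e\in E^*}w^*(e)}{|E^*|}$ and $\beta(E^* )=\frac{\sum_{e\in E\setminus E^*}w^*(e)}{|E^*|}$. The graph induced by $E^*$ has vertex set the vertices incident to some edge of $E^*$ and edge set $E^*$. An admissible solution of the constructed CSCN instance is a nonempty $E^*\subseteq E$ whose induced graph is connected and which satisfies $\alpha(E^* )\ge A$ and $\beta(E^* )\le B$. *)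

From HB Require Import structures.
From mathcomp Require Import all_boot all_order all_algebra.
Set Implicit Arguments. Unset Strict Implicit. Unset Printing Implicit Defensive.
Import Order.TTheory GRing.Theory Num.Theory.
Local Open Scope ring_scope.

Definition simple_edges (T : finType) (Ep : {set {set T}}) : Prop :=
  forall e, e \in Ep -> #|e| = 2%N.

Definition gadj (T : finType) (Ep : {set {set T}}) : rel T :=
  fun x y => [set x; y] \in Ep.

Definition graph_connected (T : finType) (Ep : {set {set T}}) : Prop :=
  forall x y : T, connect (gadj Ep) x y.

(* Constructed vertex set V = V' + {v_{i,j}}: inl x is x in V', inr (i,j) is v_{i,j}. *)
Definition VX (T : finType) (s t : nat) : finType := (T + ('I_s * 'I_t))%type.

Definition Eall (V : finType) : {set {set V}} := [set e : {set V} | #|e| == 2%N].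

(* The weight function w^* ; u i is the vertex u_i of S. *)
Definition wstar (R : realFieldType) (T : finType) (s t : nat) (u : 'I_s -> T)
  (Ep : {set {set T}}) (e : {set VX T s t}) : R :=
  if [exists i : 'I_s, exists j : 'I_t,
        e == [set (inr (i, j) : VX T s t); inl (u i)]] then 1
  else if [exists x : T, exists y : T,
        (e == [set (inl x : VX T s t); inl y]) && ([set x; y] \in Ep)] then 1 / 2
  else 0.

Definition alpha (R : realFieldType) (T : finType) (s t : nat) (u : 'I_s -> T)
  (Ep : {set {set T}}) (Es : {set {set VX T s t}}) : R :=
  (\sum_(e in Es) wstar R u Ep e) / #|Es|%:R.

Definition beta (R : realFieldType) (T : finType) (s t : nat) (u : 'I_s -> T)
  (Ep : {set {set T}}) (Es : {set {set VX T s t}}) : R :=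
  (\sum_(e in Eall (VX T s t) :\: Es) wstar R u Ep e) / #|Es|%:R.

Definition Aconst (R : realFieldType) (s t : nat) (k : R) : R :=
  ((s * t)%N%:R + k) / ((s * t)%N%:R + 2 * k).

Definition Bconst (R : realFieldType) (T : finType) (Ep : {set {set T}})
  (s t : nat) (k : R) : R :=
  (1 / 2 * (#|Ep|%:R - 2 * k)) / ((s * t)%N%:R + 2 * k).

Definition incident (V : finType) (Es : {set {set V}}) (x : V) : bool :=
  [exists e in Es, x \in e].

Definition eadj (V : finType) (Es : {set {set V}}) : rel V :=
  fun x y => [exists e in Es, (x \in e) && (y \in e) && (x != y)].

Definition induced_connected (V : finType) (Es : {set {set V}}) : Prop :=
  forall x y, incident Es x -> incident Es y -> connect (eadj Es) x y.

Definition admissible (R : realFieldType) (T : finType) (s t : nat) (u : 'I_s -> T)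
  (Ep : {set {set T}}) (k : R) (Es : {set {set VX T s t}}) : Prop :=
  [/\ Es \subset Eall (VX T s t), Es != set0, induced_connected Es,
      alpha R u Ep Es >= Aconst s t k & beta R u Ep Es <= Bconst Ep s t k].

From HB Require Import structures.
From mathcomp Require Import all_boot all_order all_algebra.
From mathcomp Require Import ring lra.
Import Order.TTheory GRing.Theory Num.Theory.
Local Open Scope ring_scope.

(* The st pendant edges {v_ij, u_i} have weight 1, the copies of the edges of
   G' weight 1/2, and every other pair weight at most 1/2.  Hence the total
   weight is at least st + |E'|/2, while a set of m edges carries weight at
   most (m + st)/2, so m beta >= (st + |E'| - m)/2.  Comparing with B m,
   the difference is (st + |E'|)(st + 2k - m)/2 up to the positive factor
   1/(st + 2k), which is positive as soon as m < st + 2k. *)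

Lemma sum_setD_subset (R : zmodType) (I : finType) (A B : {set I}) (F : I -> R) :
  B \subset A -> \sum_(i in A :\: B) F i = \sum_(i in A) F i - \sum_(i in B) F i.
Proof.
move=> sBA; rewrite [\sum_(i in A) _](big_setID B) /=.
by rewrite (setIidPr sBA) addrC addrK.
Qed.

Lemma ler_sum_subset (R : numDomainType) (I : finType) (A B : {set I}) (F : I -> R) :
  A \subset B -> (forall i, i \in B -> 0 <= F i) ->
  \sum_(i in A) F i <= \sum_(i in B) F i.
Proof.
move=> sAB F_ge0; rewrite [\sum_(i in B) _](big_setID A) /= (setIidPr sAB) lerDl.
by apply: sumr_ge0 => i; rewrite inE => /andP[_ /F_ge0].
Qed.

Lemma ratio_gt_of_weight_bounds (R : realFieldType) (n E k m W S : R) :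
  2 * k <= E -> 1 <= m -> m < n + 2 * k ->
  n + E / 2 <= W -> 2 * S <= m + n ->
  1 / 2 * (E - 2 * k) / (n + 2 * k) < (W - S) / m.
Proof.
move=> kE m_ge1 m_lt W_ge S_le.
rewrite ltr_pdivrMr; last by lra.
rewrite [X in _ < X]mulrAC ltr_pdivlMr; last by lra.
have WS : (n + E - m) / 2 <= W - S by lra.
have nk_ge0 : 0 <= n + 2 * k by lra.
apply: lt_le_trans (ler_wpM2r nk_ge0 WS).
have gap : 0 < (n + E) * (n + 2 * k - m) by apply: mulr_gt0; lra.
have -> : (n + E - m) / 2 * (n + 2 * k) = 1 / 2 * (E - 2 * k) * m + (n + E) * (n + 2 * k - m) / 2.
  by ring.
lra.
Qed.

Section Construction.
Variables (R : realFieldType) (T : finType) (Ep : {set {set T}}) (s t : nat).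
Variable u : 'I_s -> T.
Hypothesis hsimple : simple_edges Ep.

Local Notation V := (VX T s t).
Local Notation w := (@wstar R T s t u Ep).

Definition pendant_edge (p : 'I_s * 'I_t) : {set V} := [set inr p; inl (u p.1)].
Definition lift_edge (e : {set T}) : {set V} := [set inl x | x in e].
Definition pendant_edges : {set {set V}} := [set pendant_edge p | p in setT].
Definition lifted_edges : {set {set V}} := [set lift_edge e | e in Ep].

Lemma wstar_ge0 e : 0 <= w e.
Proof. by rewrite /wstar; case: ifP => _; [|case: ifP => _]; lra. Qed.

Lemma wstar_le1 e : w e <= 1.
Proof. by rewrite /wstar; case: ifP => _; [|case: ifP => _]; lra. Qed.

Lemma wstar_le_half e : e \notin pendant_edges -> w e <= 1 / 2.
Proof.
move=> e_notin; rewrite /wstar; case: ifP => [/existsP[i /existsP[j /eqP e_ij]]|_].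
  by case/imsetP: e_notin; exists (i, j); rewrite ?inE.
by case: ifP => _; lra.
Qed.

Lemma wstar_pendant p : w (pendant_edge p) = 1.
Proof.
rewrite /wstar; case: ifP => // /negbT/negP[]; apply/existsP; exists p.1.
by apply/existsP; exists p.2; case: p.
Qed.

Lemma pendant_edge_inj : injective pendant_edge.
Proof.
move=> p q epq; have : (inr p : V) \in pendant_edge q by rewrite -epq !inE eqxx.
by rewrite !inE => /orP[/eqP[]|].
Qed.

Lemma card_pendant_edges : #|pendant_edges| = (s * t)%N.
Proof. by rewrite card_imset ?cardsT ?card_prod ?card_ord //; exact: pendant_edge_inj. Qed.

Lemma lift_edge_inj : injective lift_edge.
Proof. exact/imset_inj/inl_inj. Qed.

Lemma pendant_edge_neq_lift p e : pendant_edge p != lift_edge e.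
Proof.
apply/eqP => epe; have : (inr p : V) \in lift_edge e by rewrite -epe !inE eqxx.
by case/imsetP.
Qed.

Lemma wstar_lift e : e \in Ep -> w (lift_edge e) = 1 / 2.
Proof.
move=> eEp; rewrite /wstar; case: ifP => [/existsP[i /existsP[j /eqP e_ij]]|_].
  by have := pendant_edge_neq_lift (i, j) e; rewrite e_ij eqxx.
case: ifP => // /negbT/negP[]; have /eqP/cards2P[x [y [_ exy]]] := hsimple _ eEp.
apply/existsP; exists x; apply/existsP; exists y.
by rewrite -exy eEp andbT /lift_edge exy imsetU1 imset_set1.
Qed.

Lemma pendant_edges_sub : pendant_edges \subset Eall V.
Proof. by apply/subsetP => _ /imsetP[p _ ->]; rewrite inE cards2. Qed.

Lemma lifted_edges_sub : lifted_edges \subset Eall V.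
Proof.
apply/subsetP => _ /imsetP[e eEp ->].
by rewrite inE card_imset ?(hsimple _ eEp) //; exact: inl_inj.
Qed.

Lemma disjoint_pendant_lifted : [disjoint pendant_edges & lifted_edges].
Proof.
rewrite -setI_eq0; apply/eqP/setP => e; rewrite !inE.
apply/negP => /andP[/imsetP[p _ ->] /imsetP[f _ /eqP]].
by rewrite (negbTE (pendant_edge_neq_lift p f)).
Qed.

Lemma sum_wstar_pendant : \sum_(e in pendant_edges) w e = (s * t)%N%:R.
Proof.
rewrite big_imset /=; last by move=> p q _ _; exact: pendant_edge_inj.
under eq_bigr do rewrite wstar_pendant.
by rewrite sumr_const cardsT card_prod !card_ord.
Qed.

Lemma sum_wstar_lifted : \sum_(e in lifted_edges) w e = #|Ep|%:R / 2.
Proof.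
rewrite big_imset /=; last by move=> e f _ _; exact: lift_edge_inj.
rewrite (eq_bigr (fun=> 1 / 2)) => [|e /wstar_lift //].
by rewrite sumr_const -[_ *+ #|Ep|]mulr_natr div1r mulrC.
Qed.

Lemma total_wstar_ge : (s * t)%N%:R + #|Ep|%:R / 2 <= \sum_(e in Eall V) w e.
Proof.
rewrite -sum_wstar_pendant -sum_wstar_lifted -bigU /=; last exact: disjoint_pendant_lifted.
rewrite (eq_bigl [in pendant_edges :|: lifted_edges]) => [|e]; last by rewrite !inE.
apply: ler_sum_subset => [|e _]; last exact: wstar_ge0.
by rewrite subUset pendant_edges_sub lifted_edges_sub.
Qed.

Lemma sum_wstar_le (Es : {set {set V}}) :
  2 * \sum_(e in Es) w e <= #|Es|%:R + (s * t)%N%:R.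
Proof.
rewrite (big_setID pendant_edges) /=.
have on_pendant : \sum_(e in Es :&: pendant_edges) w e <= #|Es :&: pendant_edges|%:R.
  by rewrite -sum1_card natr_sum; apply: ler_sum => e _; exact: wstar_le1.
have off_pendant : \sum_(e in Es :\: pendant_edges) w e <= #|Es :\: pendant_edges|%:R / 2.
  rewrite -sum1_card natr_sum mulr_suml; apply: ler_sum => e.
  by rewrite inE => /andP[/wstar_le_half].
have few_pendant : #|Es :&: pendant_edges|%:R <= (s * t)%N%:R :> R.
  by rewrite ler_nat -card_pendant_edges subset_leq_card ?subsetIr.
have card_split : #|Es|%:R = #|Es :&: pendant_edges|%:R + #|Es :\: pendant_edges|%:R :> R.
  by rewrite -natrD cardsID.
lra.
Qed.

End Construction.

Theorem lemma1 (R : realFieldType) (T : finType) (Ep : {set {set T}})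
  (hsimple : simple_edges Ep) (hconn : graph_connected Ep)
  (s : nat) (u : 'I_s -> T) (hu : injective u)
  (k : R) (hk : 0 <= k) (hEp : 2 * k <= #|Ep|%:R)
  (t : nat) (ht : (1 <= t)%N)
  (Es : {set {set VX T s t}}) :
  Es \subset Eall (VX T s t) -> Es != set0 ->
  #|Es|%:R < (s * t)%N%:R + 2 * k ->
  beta R u Ep Es > Bconst Ep s t k /\ ~ admissible u Ep k Es.
Proof.
move=> Es_sub Es_neq0 Es_small.
have beta_gt : Bconst Ep s t k < beta R u Ep Es.
  rewrite /beta /Bconst sum_setD_subset //.
  apply: ratio_gt_of_weight_bounds => //.
  - by rewrite ler1n lt0n cards_eq0.
  - exact: total_wstar_ge.
  - exact: sum_wstar_le.
by split=> // -[_ _ _ _]; rewrite leNgt beta_gt.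
Qed.
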